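(* Let $S$ be a $\tau$-mutation system over $\mathcal{A}=\{a_0,\dots,a_{d-1}\}$ with starting word $w$ of length $m$, fix $k\in\mathbb{N}$ with $m\ge k$, and let $\mathbf{M}^{(k)}$ be the $k$-substitution matrix. Then for every $n\in\mathbb{N}$, \[\mathbb{E}\big[\mathbf{fr}^{(k)}_{S(n)}\big]=\frac{\mathbb{E}\big[\mathbf{ct}^{(k)}_{S(n)}\big]}{m+n(\tau-1)}=\frac{1}{m+n(\tau-1)}\prod_{j=0}^{n-1}\frac{1}{m+j(\tau-1)}\Big(\mathbf{M}^{(k)}+(m+j(\tau-1)-k)\mathbf{I}\Big)\mathbf{ct}^{(k)}_w .\]
   Context: Let $\mathcal{A}=\{a_0,\dots,a_{d-1}\}$ be a finite alphabet and $\mathcal{A}^\star$ the set of finite nonempty words. A mutation law assigns to each $a_t$ a finitely supported probability distribution $\mathbb{P}_{a_t}$ on $\mathcal{A}^\star$; $\vartheta(a_t)$ is a random word with law $\mathbb{P}_{a_t}$; it is a $\tau$-mutation law if every $\mathbb{P}_{a_t}$ is supported on $\mathcal{A}^\tau$. A mutation step on $w=w_0\cdots w_{m-1}$ picks $i$ uniformly in $\{0,\dots,m-1\}$ and replaces $w_i$ by an independent sample of $\vartheta(w_i)$. A mutation system: $S(0)=w$, $S(n)=\vartheta(S(n-1))$ with independent randomness at each step. $\mathrm{ct}_v(u)$ is the number of $i\in\{0,\dots,|v|-1\}$ with $v_i\cdots v_{i+|u|-1}=u$ (indices cyclic mod $|v|$); $\mathbf{ct}^{(k)}_v=(\mathrm{ct}_v(u))_{u\in\mathcal{A}^k}$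 in lexicographic order, $\mathbf{fr}^{(k)}_v=\mathbf{ct}^{(k)}_v/|v|$. The $k$-substitution matrix $\mathbf{M}^{(k)}$ is the $d^k\times d^k$ matrix with \[\mathbf{M}^{(k)}_{u,v}=\sum_{l\ge1}\sum_{\eta\in\mathcal{A}^l}\sum_{t\in[d]}\Pr(\vartheta(a_t)=\eta)\Big(\sum_{j=1}^{k-1}\mathbb{1}[v_j=a_t]\,\mathbb{1}\big[(v_0\cdots v_{j-1}\eta v_{j+1}\cdots v_{k-1})_{[k]}=u\big]+\sum_{j=0}^{l-1}\mathbb{1}[v_0=a_t]\,\mathbb{1}\big[(\eta v_1\cdots v_{k-1})_{j+[k]}=u\big]\Big),\] where $x_{j+[k]}=x_j\cdots x_{j+k-1}$ and $x_{[k]}$ is the first $k$ symbols of $x$. *)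

From mathcomp Require Import all_boot all_order all_algebra.
Import Order.TTheory GRing.Theory Num.Theory.
Local Open Scope ring_scope.

Section Mutation.
Variables (R : realFieldType) (d tau : nat).

(* The alphabet is 'I_d (letter a_t is t); words are seq 'I_d. *)
Definition word := seq 'I_d.

Definition mutation_law (P : 'I_d -> {ffun tau.-tuple 'I_d -> R}) : Prop :=
  (forall t eta, 0 <= P t eta) /\ (forall t, \sum_(eta : tau.-tuple 'I_d) P t eta = 1).

Definition letter (v : word) (i : nat) : option 'I_d := nth None (map Some v) i.

Definition replace (v : word) (i : nat) (eta : word) : word :=
  take i v ++ eta ++ drop i.+1 v.

(* Law of S(n): a finite list of (probability, outcome) pairs. One mutation
   step picks i uniformly in {0..|v|-1} and replaces v_i by a sample of
   theta(v_i). *)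
Fixpoint law (P : 'I_d -> {ffun tau.-tuple 'I_d -> R}) (w : word) (n : nat)
  : seq (R * word) :=
  match n with
  | 0 => [:: (1, w)]
  | n'.+1 =>
    flatten [seq flatten [seq [seq (pv.1 / (size pv.2)%:R
                                      * P (tnth (in_tuple pv.2) i) eta,
                                    replace pv.2 i (val eta))
                              | eta <- enum {: tau.-tuple 'I_d}]
                          | i <- enum 'I_(size pv.2)]
            | pv <- law P w n']
  end.

Definition expect P w n (f : word -> R) : R :=
  \sum_(pv <- law P w n) pv.1 * f pv.2.

Definition ct (k : nat) (v : word) (u : k.-tuple 'I_d) : nat :=
  #|[set i : 'I_(size v) |
      [forall j : 'I_k, letter v ((i + j) %% size v) == Some (tnth u j)]]|.

Definition fr (k : nat) (v : word) (u : k.-tuple 'I_d) : R :=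
  (ct k v u)%:R / (size v)%:R.

Definition subst_matrix (P : 'I_d -> {ffun tau.-tuple 'I_d -> R}) (k : nat)
  (u v : k.-tuple 'I_d) : R :=
  \sum_(t < d) \sum_(eta : tau.-tuple 'I_d) P t eta *
    ( \sum_(1 <= j < k)
        ((letter v j == Some t) &&
         (take k (replace v j eta) == val u) : nat)%:R
    + \sum_(0 <= j < tau)
        ((letter v 0 == Some t) &&
         (take k (drop j (val eta ++ behead v)) == val u) : nat)%:R ).

(* x_n := prod_{j=0}^{n-1} (1/(m+j(tau-1))) (M^(k) + (m+j(tau-1)-k) I) ct_w,
   the factors being applied with j = 0 first (they commute). *)
Fixpoint rhs_vec (P : 'I_d -> {ffun tau.-tuple 'I_d -> R}) (k : nat) (w : word)
  (n : nat) : k.-tuple 'I_d -> R :=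
  match n with
  | 0 => fun u => (ct k w u)%:R
  | j.+1 => fun u =>
      let L := (size w + j * (tau - 1))%:R in
      L^-1 * (\sum_(v : k.-tuple 'I_d) subst_matrix P k u v * rhs_vec P k w j v
              + (L - k%:R) * rhs_vec P k w j u)
  end.

End Mutation.

Arguments word {d}.
Arguments mutation_law {R d tau}.
Arguments letter {d}.
Arguments replace {d}.
Arguments law {R d tau}.
Arguments expect {R d tau}.
Arguments ct {d k}.
Arguments fr {R d k}.
Arguments subst_matrix {R d tau} P {k}.
Arguments rhs_vec {R d tau} P k.

From mathcomp Require Import all_boot all_order all_algebra zify.
Import GRing.Theory Num.Theory.

Set Implicit Arguments.
Unset Strict Implicit.
Unset Printing Implicit Defensive.

(* Conditionally on S(n) = x, with |x| = L, mutating position i into eta only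
   changes the cyclic k-windows of x that cover i.  Rotating x so that i comes
   first turns the mutated word into eta ++ behead x, whose windows are the
   L - k windows of x avoiding i, the k - 1 windows covering i at an offset
   j >= 1 (with their letter j replaced by eta), and the tau windows starting
   inside eta.  Averaging over i and eta, the first group contributes
   (L - k) ct_x(u); reindexing the other two by the starting point v of the
   window of x they come from, they contribute sum_v M_(u,v) ct_x(v).  Every
   word in the support of S(n) has length m + n(tau - 1), so linearity of
   expectation gives E[ct_S(n+1)] = (M + (L_n - k) I) E[ct_S(n)] / L_n. *)

Lemma nth_rot (T : Type) (x0 : T) (s : seq T) i m :
  (i <= size s) -> (m < size s) ->
  nth x0 (rot i s) m = nth x0 s ((m + i) %% size s).
Proof.
move=> le_i_s lt_m_s; rewrite /rot nth_cat size_drop.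
case: ifP => m_lt.
  by rewrite nth_drop modn_small; [congr nth; lia | lia].
rewrite nth_take; last lia.
have -> : (m + i = (m + i - size s) + size s) by lia.
by rewrite modnDr modn_small; [congr nth; lia | lia].
Qed.

Lemma big_ord_shift_periodic (R : Type) (idx : R) (op : Monoid.com_law idx)
    (L c : nat) (f : nat -> R) :
  (forall p, f (p %% L) = f p) ->
  \big[op/idx]_(p < L) f (c + p) = \big[op/idx]_(p < L) f p.
Proof.
move=> f_per; elim: c => [|c IHc]; first exact: eq_bigr.
rewrite -IHc; case: L f_per {IHc} => [|L] f_per; first by rewrite !big_ord0.
rewrite big_ord_recr big_ord_recl [RHS](Monoid.mulmC op); congr (op _ _).
  by apply: eq_bigr => i _; rewrite lift0 addSnnS.
by rewrite /= -(f_per (c.+1 + L)) -(f_per (c + 0)) addn0 addSnnS modnDr.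
Qed.

Section CyclicWindows.
Variables (d k : nat) (a0 : 'I_d).

Definition cwindow (x : seq 'I_d) (p : nat) : k.-tuple 'I_d :=
  [tuple nth a0 x ((p + j) %% size x) | j < k].

Lemma letter_nth (x : seq 'I_d) i : (i < size x) -> letter x i = Some (nth a0 x i).
Proof. by move=> lt_i_x; rewrite /letter (nth_map a0). Qed.

Lemma nth_cwindow x p j :
  (j < k) -> nth a0 (cwindow x p) j = nth a0 x ((p + j) %% size x).
Proof. by move=> lt_j_k; rewrite -(tnth_nth a0 _ (Ordinal lt_j_k)) tnth_mktuple. Qed.

Lemma cwindow_mod x p : cwindow x (p %% size x) = cwindow x p.
Proof. by apply: eq_from_tnth => j; rewrite !tnth_mktuple modnDml. Qed.

Lemma ct_cwindow (x : seq 'I_d) (u : k.-tuple 'I_d) :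
  ct x u = \sum_(p < size x) (cwindow x p == u).
Proof.
rewrite /ct -sum1_card big_mkcond /=; apply: eq_bigr => p _; rewrite inE.
have x_gt0 : (0 < size x) by apply: leq_ltn_trans (ltn_ord p).
suff -> : [forall j : 'I_k, letter x ((p + j) %% size x) == Some (tnth u j)]
          = (cwindow x p == u) by case: (_ == u).
rewrite eqEtuple; apply: eq_forallb => j.
by rewrite tnth_mktuple letter_nth ?ltn_pmod.
Qed.

Lemma cwindow_rot x i p : (i <= size x) -> cwindow (rot i x) p = cwindow x (i + p).
Proof.
move=> le_i_x; apply: eq_from_tnth => j; rewrite !tnth_mktuple size_rot.
have [x0|x_gt0] := posnP (size x).
  by rewrite !nth_default ?size_rot ?x0.
rewrite nth_rot ?ltn_pmod // modnDml; congr (nth _ _ (_ %% _)); lia.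
Qed.

End CyclicWindows.

Arguments cwindow {d} k a0 x p : simpl never.

Lemma ct_rot d k (x : seq 'I_d) i (u : k.-tuple 'I_d) :
  (i <= size x) -> ct (rot i x) u = ct x u.
Proof.
case: x => [|a0 s] le_i_x; first by case: i {le_i_x}.
rewrite !(ct_cwindow a0) size_rot.
under eq_bigr do rewrite cwindow_rot //.
by apply: (@big_ord_shift_periodic _ 0 addn _ _ (fun p => cwindow k a0 _ p == u : nat))
  => p; rewrite cwindow_mod.
Qed.

Lemma rot_replace d (x eta : seq 'I_d) i : (i < size x) ->
  rot i (replace x i eta) = eta ++ behead (rot i x).
Proof.
case: x => // a0 s lt_i_s.
have size_take_i : size (take i (a0 :: s)) = i by rewrite size_takel // ltnW.
by rewrite /replace -{1}size_take_i rot_size_cat /rot -catA [in RHS](drop_nth a0).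
Qed.

Section MutatedWindows.
Variables (d k : nat) (a0 : 'I_d).
Local Notation cwindow := (cwindow k a0).

Section CatBehead.
Variables (x eta : seq 'I_d).
Hypotheses (k_gt0 : (0 < k)) (le_k_x : (k <= size x)).

Let size_cat_behead : size (eta ++ behead x) = (size eta + (size x).-1).
Proof. by rewrite size_cat size_behead. Qed.

Lemma cwindow_cat_behead_head q : (q < size eta) ->
  val (cwindow (eta ++ behead x) q) = take k (drop q (eta ++ behead (cwindow x 0))).
Proof.
move=> lt_q_eta; apply: (eq_from_nth (x0 := a0)).
  by rewrite size_tuple size_take size_drop size_cat size_behead size_tuple; case: ifP; lia.
move=> m; rewrite size_tuple => lt_m_k.
rewrite nth_cwindow // nth_take // nth_drop size_cat_behead modn_small; last lia.
rewrite !nth_cat; case: ifP => // not_in_eta.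
rewrite !nth_behead nth_cwindow; last lia.
by rewrite modn_small; [congr nth; lia | lia].
Qed.

Lemma cwindow_cat_behead_tail r : (0 < size eta) -> (r < size x - k) ->
  cwindow (eta ++ behead x) (size eta + r) = cwindow x r.+1.
Proof.
move=> eta_gt0 lt_r; apply: eq_from_tnth => j; rewrite !tnth_mktuple size_cat_behead.
have lt_j_k := ltn_ord j.
rewrite !modn_small; try lia.
by rewrite nth_cat ifF ?nth_behead; [congr nth; lia | lia].
Qed.

(* The window starting j letters before the end of eta ++ behead x wraps
   around and meets eta at offset j. *)
Lemma cwindow_cat_behead_overlap j : (0 < size eta) -> (0 < j < k) ->
  val (cwindow (eta ++ behead x) (size eta + size x - j - 1))
  = take k (replace (cwindow x (size x - j)) j eta).
Proof.
move=> eta_gt0 /andP[j_gt0 lt_j_k]; apply: (eq_from_nth (x0 := a0)).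
  rewrite size_tuple size_take /replace !size_cat size_take size_drop !size_tuple.
  by rewrite lt_j_k; case: ifP; lia.
move=> m; rewrite size_tuple => lt_m_k.
rewrite nth_cwindow // nth_take // size_cat_behead /replace.
have [lt_m_j|le_j_m] := ltnP m j.
  rewrite modn_small; last lia.
  rewrite [RHS]nth_cat size_take size_tuple lt_j_k ifT; last lia.
  rewrite nth_take // nth_cwindow // modn_small; last lia.
  by rewrite nth_cat ifF ?nth_behead; [congr nth; lia | lia].
set N := (size eta + (size x).-1).
have -> : (size eta + size x - j - 1 + m = (size eta + size x - j - 1 + m - N) + N) by lia.
rewrite modnDr modn_small; last lia.
rewrite [RHS]nth_cat size_take size_tuple lt_j_k ifF; last lia.
rewrite [RHS]nth_cat; case: ifP => in_eta.
  by rewrite nth_cat ifT; [congr nth; lia | lia].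
rewrite nth_cat ifF; last lia.
rewrite nth_drop nth_cwindow ?nth_behead; last lia.
have -> : (size x - j + (j.+1 + (m - j - size eta))
           = (m + 1 - size eta - j) + size x) by lia.
by rewrite modnDr modn_small; [congr nth; lia | lia].
Qed.

Lemma ct_cat_behead (u : k.-tuple 'I_d) : (0 < size eta) ->
  ct (eta ++ behead x) u =
    \sum_(r < size x - k) (cwindow x r.+1 == u)
  + \sum_(1 <= j < k) (take k (replace (cwindow x (size x - j)) j eta) == val u)
  + \sum_(q < size eta) (take k (drop q (eta ++ behead (cwindow x 0))) == val u).
Proof.
move=> eta_gt0; rewrite (ct_cwindow a0) size_cat_behead.
rewrite -(big_mkord xpredT (fun p => (cwindow (eta ++ behead x) p == u) : nat)).
rewrite (@big_cat_nat _ _ _ (size eta)) //=; last lia.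
rewrite [RHS]addnC; congr (_ + _).
  by rewrite big_mkord; apply: eq_bigr => q _; rewrite -cwindow_cat_behead_head // val_eqE.
rewrite -{1}[size eta]add0n big_addn addKn.
have -> : ((size x).-1 = (size x - k) + (k - 1)) by lia.
rewrite big_mkord big_split_ord /=; congr (_ + _).
  by apply: eq_bigr => r _; rewrite addnC cwindow_cat_behead_tail.
rewrite (big_addn 0 k 1) big_mkord (reindex_inj rev_ord_inj) /=.
apply: eq_bigr => i _; have lt_i := ltn_ord i.
rewrite -cwindow_cat_behead_overlap //; last lia.
by rewrite val_eqE; congr (cwindow _ _ == u); lia.
Qed.

End CatBehead.

Lemma ct_replace (x eta : seq 'I_d) i (u : k.-tuple 'I_d) :
  (0 < k) -> (k <= size x) -> (i < size x) -> (0 < size eta) ->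
  ct (replace x i eta) u =
    \sum_(r < size x - k) (cwindow x (i + r.+1) == u)
  + \sum_(1 <= j < k) (take k (replace (cwindow x (i + (size x - j))) j eta) == val u)
  + \sum_(q < size eta) (take k (drop q (eta ++ behead (cwindow x i))) == val u).
Proof.
move=> k_gt0 le_k_x lt_i_x eta_gt0.
have size_replace : size (replace x i eta) = (size x + size eta - 1).
  by rewrite /replace !size_cat size_takel ?size_drop; lia.
rewrite -(@ct_rot _ _ (replace x i eta) i) ?size_replace; last lia.
rewrite rot_replace // ct_cat_behead ?size_rot // !cwindow_rot ?addn0; try lia.
congr (_ + _ + _); apply: eq_bigr => r _; by rewrite cwindow_rot // ltnW.
Qed.

End MutatedWindows.

Local Open Scope ring_scope.

Lemma sum_letter_indicator (R : pzSemiRingType) d (a : 'I_d) (G : 'I_d -> R) (c : bool) :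
  \sum_(t < d) G t * (((Some a == Some t) && c) : nat)%:R = G a * (c : nat)%:R.
Proof.
rewrite (bigD1 a) //= eqxx big1 ?addr0 // => t t_neq_a.
by rewrite (inj_eq Some_inj) eq_sym (negbTE t_neq_a) mulr0.
Qed.

Section SubstitutionMatrix.
Variables (R : realFieldType) (d tau k : nat) (a0 : 'I_d).
Variable P : 'I_d -> {ffun tau.-tuple 'I_d -> R}.
Hypothesis k_gt0 : (0 < k)%N.

Lemma subst_matrixE (u v : k.-tuple 'I_d) :
  subst_matrix P u v =
    \sum_(1 <= j < k) \sum_(eta : tau.-tuple 'I_d)
        P (nth a0 v j) eta * (take k (replace v j eta) == val u : nat)%:R
  + \sum_(eta : tau.-tuple 'I_d) P (nth a0 v 0) eta *
        \sum_(q < tau) (take k (drop q (val eta ++ behead v)) == val u : nat)%:R.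
Proof.
rewrite /subst_matrix.
under eq_bigr do under eq_bigr do rewrite mulrDr !mulr_sumr.
under eq_bigr do rewrite big_split.
rewrite big_split; congr (_ + _).
  rewrite exchange_big /=; under eq_bigr do rewrite exchange_big /=.
  rewrite exchange_big /=; apply: eq_big_nat => j /andP[_ lt_j_k].
  apply: eq_bigr => eta _; rewrite (letter_nth a0) ?size_tuple //.
  exact: (sum_letter_indicator _ (fun t => P t eta)).
rewrite exchange_big /=; apply: eq_bigr => eta _.
rewrite exchange_big /= big_mkord mulr_sumr; apply: eq_bigr => q _.
rewrite (letter_nth a0) ?size_tuple //.
exact: (sum_letter_indicator _ (fun t => P t eta)).
Qed.

Lemma sum_subst_matrix_ct (x : seq 'I_d) (u : k.-tuple 'I_d) :
  \sum_(v : k.-tuple 'I_d) subst_matrix P u v * (ct x v)%:R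
  = \sum_(p < size x) subst_matrix P u (cwindow k a0 x p).
Proof.
under eq_bigr do rewrite (ct_cwindow a0) natr_sum mulr_sumr.
rewrite exchange_big /=; apply: eq_bigr => p _.
rewrite (bigD1 (cwindow k a0 x p)) //= eqxx mulr1 big1 ?addr0 // => v v_neq.
by rewrite eq_sym (negbTE v_neq) mulr0.
Qed.

End SubstitutionMatrix.

Section MutationStep.
Variables (R : realFieldType) (d tau k : nat).
Variable P : 'I_d -> {ffun tau.-tuple 'I_d -> R}.
Hypotheses (tau_gt0 : (0 < tau)%N) (k_gt0 : (0 < k)%N).
Hypothesis P_sum1 : forall t, \sum_(eta : tau.-tuple 'I_d) P t eta = 1.

Lemma sum_ct_replace (x : seq 'I_d) (u : k.-tuple 'I_d) : (k <= size x)%N ->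
  \sum_(i < size x) \sum_(eta : tau.-tuple 'I_d)
      P (tnth (in_tuple x) i) eta * (ct (replace x i eta) u)%:R
  = (size x - k)%:R * (ct x u)%:R
    + \sum_(v : k.-tuple 'I_d) subst_matrix P u v * (ct x v)%:R.
Proof.
move=> le_k_x; have x_gt0 : (0 < size x)%N by lia.
pose a0 := tnth (in_tuple x) (Ordinal x_gt0).
pose cw := cwindow k a0 x.
under eq_bigr => i _ do under eq_bigr => eta _ do
  rewrite (tnth_nth a0) (ct_replace a0) ?size_tuple ?ltn_ord // !natrD !natr_sum !mulrDr.
rewrite (sum_subst_matrix_ct a0).
rewrite (eq_bigr _ (fun (p : 'I_(size x)) _ => subst_matrixE a0 P k_gt0 u (cw p))).
under eq_bigr do rewrite !big_split.
rewrite !big_split /= -addrA; congr (_ + (_ + _)).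
- under eq_bigr do rewrite -mulr_suml P_sum1 mul1r.
  rewrite exchange_big (eq_bigr (fun=> (ct x u)%:R)) => [|r _].
    by rewrite sumr_const card_ord mulr_natl.
  rewrite (ct_cwindow a0) natr_sum
    -(@big_ord_shift_periodic _ 0 +%R _ r.+1 (fun p => (cw p == u : nat)%:R)).
    by apply: eq_bigr => i _; rewrite addnC.
  by move=> p; rewrite /cw cwindow_mod.
- under eq_bigr do under eq_bigr do rewrite mulr_sumr.
  under eq_bigr do rewrite exchange_big.
  rewrite exchange_big [RHS]exchange_big; apply: eq_big_nat => j /andP[_ lt_j_k].
  pose F p := \sum_(eta : tau.-tuple 'I_d) P (nth a0 (cw p) j) eta *
                (take k (replace (cw p) j eta) == val u : nat)%:R.
  rewrite -[RHS](@big_ord_shift_periodic _ 0 +%R _ (size x - j) F); last first.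
    by move=> p; rewrite /F /cw cwindow_mod.
  apply: eq_bigr => i _; apply: eq_bigr => eta _.
  rewrite /cw nth_cwindow // [(i + _)%N]addnC; congr (P _ _ * _).
  have -> : (size x - j + i + j = i + size x)%N by lia.
  by rewrite modnDr modn_small.
- apply: eq_bigr => i _; apply: eq_bigr => eta _.
  by rewrite nth_cwindow // addn0 modn_small.
Qed.

End MutationStep.

Section Expectation.
Variables (R : realFieldType) (d tau : nat).
Variable P : 'I_d -> {ffun tau.-tuple 'I_d -> R}.
Hypothesis tau_gt0 : (0 < tau)%N.

Lemma expect_succ w n f :
  expect P w n.+1 f = \sum_(pv <- law P w n) pv.1 / (size pv.2)%:R *
     \sum_(i < size pv.2) \sum_(eta : tau.-tuple 'I_d)
        P (tnth (in_tuple pv.2) i) eta * f (replace pv.2 i eta).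
Proof.
rewrite /expect /= big_flatten /= big_map; apply: eq_bigr => pv _.
rewrite big_flatten /= big_map mulr_sumr big_enum /=; apply: eq_bigr => i _.
by rewrite big_map big_enum /= mulr_sumr; apply: eq_bigr => eta _; rewrite mulrA.
Qed.

Lemma size_law w n pv : pv \in law P w n -> size pv.2 = (size w + n * (tau - 1))%N.
Proof.
elim: n pv => [|n IHn] pv /=; first by rewrite inE => /eqP ->; rewrite addn0.
move=> /flatten_mapP[pv' /IHn size_pv' /flatten_mapP[i _ /mapP[eta _ ->]]] /=.
move: (ltn_ord i); move: (nat_of_ord i) => m; rewrite size_pv' => lt_m.
rewrite /replace !size_cat size_takel ?size_drop ?size_tuple ?size_pv'; last lia.
by rewrite mulSn; move: (n * (tau - 1))%N lt_m => N; lia.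
Qed.

Lemma expectZ w n c f : expect P w n (fun x => c * f x) = c * expect P w n f.
Proof. by rewrite /expect mulr_sumr; apply: eq_bigr => pv _; rewrite mulrCA. Qed.

Lemma expectD w n f g :
  expect P w n (fun x => f x + g x) = expect P w n f + expect P w n g.
Proof. by rewrite /expect -big_split; apply: eq_bigr => pv _; rewrite mulrDr. Qed.

Lemma expect_sum w n (I : finType) (F : I -> word -> R) :
  expect P w n (fun x => \sum_(i : I) F i x) = \sum_(i : I) expect P w n (F i).
Proof.
rewrite /expect exchange_big; apply: eq_bigr => pv _; exact: mulr_sumr.
Qed.

Section Counts.
Variables (k : nat) (w : seq 'I_d).
Hypotheses (k_gt0 : (0 < k)%N) (le_k_w : (k <= size w)%N).
Hypothesis P_sum1 : forall t, \sum_(eta : tau.-tuple 'I_d) P t eta = 1.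

Lemma expect_succ_ct n (u : k.-tuple 'I_d) :
  let L := (size w + n * (tau - 1))%N in
  expect P w n.+1 (fun x => (ct x u)%:R) =
  expect P w n (fun x => L%:R^-1 * ((L - k)%:R * (ct x u)%:R
                 + \sum_(v : k.-tuple 'I_d) subst_matrix P u v * (ct x v)%:R)).
Proof.
rewrite expect_succ /expect !big_seq; apply: eq_bigr => pv /size_law size_pv.
rewrite sum_ct_replace // ?size_pv ?mulrA //.
exact: leq_trans le_k_w (leq_addr _ _).
Qed.

Lemma expect_ct n (u : k.-tuple 'I_d) :
  expect P w n (fun x => (ct x u)%:R) = rhs_vec P k w n u.
Proof.
elim: n u => [|n IHn] u; first by rewrite /expect big_cons big_nil addr0 mul1r.
rewrite expect_succ_ct expectZ expectD expectZ expect_sum IHn /= addrC natrB.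
  by congr (_ * (_ + _)); apply: eq_bigr => v _; rewrite expectZ IHn.
exact: leq_trans le_k_w (leq_addr _ _).
Qed.

End Counts.

End Expectation.

Theorem mainTheorem6 (R : realFieldType) (d tau : nat)
  (P : 'I_d -> {ffun tau.-tuple 'I_d -> R}) (w : seq 'I_d) (k : nat) :
  (0 < tau)%N -> mutation_law P -> (0 < k)%N -> (k <= size w)%N ->
  forall (n : nat) (u : k.-tuple 'I_d),
    let L := (size w + n * (tau - 1))%:R in
    expect P w n (fun v => fr v u) = expect P w n (fun v => (ct v u)%:R) / L /\
    expect P w n (fun v => (ct v u)%:R) / L = L^-1 * rhs_vec P k w n u.
Proof.
move=> tau_gt0 [_ P_sum1] k_gt0 le_k_w n u L; split.
  rewrite /expect mulr_suml !big_seq; apply: eq_bigr => pv /size_law size_pv.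
  by rewrite /fr size_pv // mulrA.
by rewrite expect_ct // mulrC.
Qed.
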